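(* Let $G$ and $H$ be two nontrivial connected graphs with orders $m$ and $n$ respectively. Then $$C_{cc}(G\Box H)=\max\{n\cdot C_{cc}(G),\ m\cdot C_{cc}(H)\}.$$
   Context: All graphs are finite, simple and undirected. For a graph $G$ and $S\subseteq V(G)$, the cycle interval $\langle S\rangle$ consists of the vertices of $S$ together with every vertex $w\in V(G)\setminus S$ such that $G[S\cup\{w\}]$ contains a cycle through $w$; $S$ is cycle convex if $\langle S\rangle=S$. The cycle convexity number $C_{cc}(G)$ is the maximum cardinality of a proper (i.e. $\neq V(G)$) cycle convex subset of $V(G)$. The Cartesian product $G\Box H$ has vertex set $V(G)\times V(H)$, with $(g_1,h_1)\sim(g_2,h_2)$ iff ($g_1\sim g_2$ and $h_1=h_2$) or ($g_1=g_2$ and $h_1\sim h_2$). A graph is nontrivial if it has at least two vertices. *)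

From mathcomp Require Import all_boot.
Set Implicit Arguments. Unset Strict Implicit. Unset Printing Implicit Defensive.

Section CycleConvexity.
Variable T : finType.
Variable e : rel T.

Definition simple_graph : Prop := symmetric e /\ irreflexive e.

Definition connected_graph : Prop := forall x y : T, connect e x y.

(* Cycles are duplicate-free hence have at most #|T| vertices, so
   bounding the length by #|T| loses nothing (and makes the test boolean). *)
Definition is_cycle (c : seq T) : bool := [&& 2 < size c, uniq c & cycle e c].

Definition cycle_through_in (A : {set T}) (w : T) : bool :=
  [exists n : 'I_(#|T|.+1), exists t : n.-tuple T,
     [&& is_cycle t, w \in tval t & all (fun v => v \in A) t]].

Definition cycle_interval (S : {set T}) : {set T} :=
  S :|: [set w | (w \notin S) && cycle_through_in (w |: S) w].

Definition cycle_convex (S : {set T}) : bool := cycle_interval S == S.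

Definition Ccc : nat :=
  \max_(S : {set T} | (S != [set: T]) && cycle_convex S) #|S|.

End CycleConvexity.

Definition box_rel (T1 T2 : finType) (e1 : rel T1) (e2 : rel T2) : rel (T1 * T2) :=
  fun u v => (e1 u.1 v.1 && (u.2 == v.2)) || ((u.1 == v.1) && e2 u.2 v.2).

From mathcomp Require Import all_boot.
Set Implicit Arguments. Unset Strict Implicit. Unset Printing Implicit Defensive.

(* A proper cycle convex set W of G [] H meets every layer G x {h} in a cycle
   convex set of G, so if all these layers are proper then |W| <= n C(G);
   symmetrically for the layers {g} x H.  Otherwise W contains a whole G-layer
   and a whole H-layer, and since three corners of a 4-cycle in W force the
   fourth, connectivity spreads W over all of G [] H.  Conversely, if S is
   cycle convex in G then so is S x V(H): a cycle leaving S x V(H) only at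
   (g, h) enters it through two distinct neighbours (g1, h), (g2, h) joined by
   a path inside S x V(H), and the projection of that path to G closes a cycle
   through g in G[S + g]. *)

Lemma connect_weak_homo (T T' : finType) (e : rel T) (e' : rel T') (f : T -> T') :
    (forall x y, e x y -> (f x == f y) || e' (f x) (f y)) ->
  forall x y, connect e x y -> connect e' (f x) (f y).
Proof.
move=> fe x _ /connectP [p pe ->]; elim: p x pe => //= y p IH x /andP [/fe exy /IH].
by apply: connect_trans; case/orP: exy => [/eqP -> | /connect1].
Qed.

Section CycleInterval.
Variables (T : finType) (e : rel T).

Definition induced (A : {set T}) : rel T := [rel x y | [&& x \in A, y \in A & e x y]].

Lemma induced_path (A : {set T}) x s :
  x \in A -> path (induced A) x s = path e x s && all (mem A) s.
Proof.
elim: s x => //= y s IH x xA; rewrite /induced /= xA.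
by case yA: (y \in A); rewrite ?andbF //= IH // andbA.
Qed.

Lemma connect_induced_mem (A : {set T}) a b :
  a != b -> connect (induced A) a b -> (a \in A) && (b \in A).
Proof.
move=> ab /connectP [[|y p] /= pth bE]; first by rewrite bE eqxx in ab.
case/andP: pth => /and3P [aA yA _]; rewrite (induced_path p yA) aA => /andP [_ pA].
by rewrite bE; apply: (allP (_ : all (mem A) (y :: p))); rewrite /= ?yA ?mem_last.
Qed.

Lemma cycle_through_in_seqP (A : {set T}) w :
  reflect (exists c : seq T, [&& is_cycle e c, w \in c & all (mem A) c])
          (cycle_through_in e A w).
Proof.
apply: (iffP existsP) => [[n /existsP [t ct]] | [c /and3P [cc wc cA]]].
  by exists (tval t).
have size_c : size c < #|T|.+1.
  by case/and3P: cc => _ uc _; rewrite ltnS -(card_uniqP uc) max_card.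
by exists (Ordinal size_c); apply/existsP; exists (in_tuple c); rewrite /= cc wc.
Qed.

Lemma cycle_through_inP (A : {set T}) w : w \notin A ->
  reflect (exists a b, [/\ a != b, e w a, e b w & connect (induced A) a b])
          (cycle_through_in e (w |: A) w).
Proof.
move=> wA; apply: (iffP (cycle_through_in_seqP _ _)).
- case=> c /and3P [cc /rot_to [i s cE] cA].
  have /and3P [size_s us cs] : is_cycle e (w :: s).
    by rewrite -cE /is_cycle size_rot rot_uniq rot_cycle.
  have sA : all (mem (w |: A)) (w :: s).
    by apply/allP => v; rewrite -cE mem_rot => /(allP cA).
  case: s size_s us cs sA {cE} => [|a [|x s]] // _ /andP [w_axs uaxs].
  rewrite /cycle rcons_path => /andP [pwaxs ebw] sA.
  case/andP: pwaxs => ewa paxs.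
  have mem_A v : v \in [:: a, x & s] -> v \in A.
    move=> vas; have := allP sA v; rewrite in_cons vas orbT => /(_ isT).
    by rewrite !inE => /orP [/eqP vw | //]; rewrite -vw vas in w_axs.
  exists a, (last x s); split => //.
    by case/andP: uaxs => a_xs _; apply: contraNneq a_xs => ->; apply: mem_last.
  apply/connectP; exists (x :: s) => //.
  rewrite induced_path ?mem_A ?mem_head //; apply/andP; split => //.
  by apply/allP => v vs; apply: mem_A; rewrite inE vs orbT.
- case=> a [b [ab ewa ebw cab]].
  have /andP [aA _] := connect_induced_mem ab cab.
  case/connectP: cab => p pp bE.
  case: (shortenP pp) bE => q pq uq _ bE.
  rewrite induced_path // in pq; case/andP: pq => pq qA.
  case: q bE uq pq qA => [|x q] bE; first by rewrite bE eqxx in ab.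
  move=> uq pq qA; rewrite /= in bE.
  have axqA : all (mem A) [:: a, x & q] by rewrite /= aA.
  have w_axq : w \notin [:: a, x & q] by apply: contra wA => /(allP axqA).
  exists [:: w, a, x & q]; apply/and3P; split; last 2 first.
  - exact: mem_head.
  - apply/allP => v; rewrite in_cons => /orP [/eqP -> | /(allP axqA) vA].
      exact: setU11.
    exact: setU1r.
  - apply/and3P; split => //; first by rewrite cons_uniq w_axq.
    by rewrite /cycle rcons_path /= ewa -bE ebw andbT.
Qed.

Lemma cycle_convexP (S : {set T}) :
  reflect (forall w a b, w \notin S -> a != b -> e w a -> e b w ->
             ~~ connect (induced S) a b)
          (cycle_convex e S).
Proof.
rewrite /cycle_convex /cycle_interval; apply: (iffP eqP) => [SE w a b wS ab ewa ebw | convS].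
  apply/negP => cab; have : w \in S :|: [set w | (w \notin S) && cycle_through_in e (w |: S) w].
    by rewrite in_setU inE wS; apply/orP; right; apply/cycle_through_inP => //; exists a, b.
  by rewrite SE (negbTE wS).
apply/setP => w; rewrite in_setU inE; case: (boolP (w \in S)) => //= wS.
apply/negbTE/negP => /(cycle_through_inP wS) [a [b [ab ewa ebw cab]]].
exact: negP (convS _ _ _ wS ab ewa ebw) cab.
Qed.

Lemma leq_Ccc (S : {set T}) : S != setT -> cycle_convex e S -> #|S| <= Ccc e.
Proof.
move=> ST convS.
by apply: (@leq_bigmax_cond _ (fun S => (S != setT) && cycle_convex e S)); rewrite ST.
Qed.

Lemma mul_Ccc_leq k n :
  (forall S : {set T}, S != setT -> cycle_convex e S -> k * #|S| <= n) -> k * Ccc e <= n.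
Proof.
move=> le_n; rewrite /Ccc; elim/big_rec: _ => [|S m /andP [ST convS] IH]; first by rewrite muln0.
by rewrite maxnMr geq_max le_n.
Qed.

Lemma Ccc_leq n :
  (forall S : {set T}, S != setT -> cycle_convex e S -> #|S| <= n) -> Ccc e <= n.
Proof.
by move=> le_n; rewrite -[Ccc e]mul1n; apply: mul_Ccc_leq => S; rewrite mul1n; apply: le_n.
Qed.

End CycleInterval.

Lemma cycle_convex_preim (T T' : finType) (e : rel T) (e' : rel T') (f : T' -> T) (W : {set T}) :
  injective f -> {homo f : x y / e' x y >-> e x y} ->
  cycle_convex e W -> cycle_convex e' (f @^-1: W).
Proof.
move=> f_inj f_homo /cycle_convexP convW; apply/cycle_convexP => w a b.
rewrite !inE -(inj_eq f_inj) => wW ab ewa ebw.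
apply: contra (convW _ _ _ wW ab (f_homo _ _ ewa) (f_homo _ _ ebw)).
apply: connect_weak_homo => x y; rewrite /induced /= !inE.
by case/and3P => -> -> /f_homo ->; rewrite orbT.
Qed.

Lemma Ccc_leq_bij (T T' : finType) (e : rel T) (e' : rel T') (f : T' -> T) :
  bijective f -> {homo f : x y / e' x y >-> e x y} -> Ccc e <= Ccc e'.
Proof.
move=> f_bij f_homo; have [g fK gK] := f_bij.
apply: Ccc_leq => W WT convW; rewrite -(on_card_preimset (onW_bij _ f_bij)).
apply: leq_Ccc; last exact: cycle_convex_preim (can_inj fK) f_homo convW.
apply: contra WT => /eqP fW; apply/eqP/setP => x; rewrite inE.
have : g x \in f @^-1: W by rewrite fW inE.
by rewrite inE gK.
Qed.

Lemma Ccc_bij (T T' : finType) (e : rel T) (e' : rel T') (f : T' -> T) :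
  bijective f -> (forall x y, e' x y = e (f x) (f y)) -> Ccc e' = Ccc e.
Proof.
move=> f_bij fe; have [g fK gK] := f_bij.
apply/eqP; rewrite eqn_leq (Ccc_leq_bij f_bij) ?andbT => [|x y]; last by rewrite fe.
by apply: (@Ccc_leq_bij _ _ _ _ g) => [|x y]; [exists f | rewrite fe !gK].
Qed.

Section BoxProduct.
Variables (T1 T2 : finType) (e1 : rel T1) (e2 : rel T2).
Local Notation box := (box_rel e1 e2).

Definition row_of (W : {set T1 * T2}) (h : T2) : {set T1} := (fun g => (g, h)) @^-1: W.
Definition col_of (W : {set T1 * T2}) (g : T1) : {set T2} := (fun h => (g, h)) @^-1: W.

Lemma card_pairs (W : {set T1 * T2}) :
  #|W| = \sum_(g : T1) \sum_(h : T2) (if (g, h) \in W then 1 else 0).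
Proof. by rewrite -sum1_card big_mkcond pair_bigA; apply: eq_bigr => -[]. Qed.

Lemma card_rows (W : {set T1 * T2}) : #|W| = \sum_(h : T2) #|row_of W h|.
Proof.
rewrite card_pairs exchange_big; apply: eq_bigr => h _.
by rewrite -sum1_card [RHS]big_mkcond; apply: eq_bigr => g _; rewrite inE.
Qed.

Lemma card_cols (W : {set T1 * T2}) : #|W| = \sum_(g : T1) #|col_of W g|.
Proof.
rewrite card_pairs; apply: eq_bigr => g _.
by rewrite -sum1_card [RHS]big_mkcond; apply: eq_bigr => h _; rewrite inE.
Qed.

Lemma cycle_convex_row (W : {set T1 * T2}) h :
  cycle_convex box W -> cycle_convex e1 (row_of W h).
Proof.
apply: cycle_convex_preim => [x y [] // | x y exy].
by rewrite /box_rel /= exy eqxx.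
Qed.

Lemma cycle_convex_col (W : {set T1 * T2}) g :
  cycle_convex box W -> cycle_convex e2 (col_of W g).
Proof.
apply: cycle_convex_preim => [x y [] // | x y exy].
by rewrite /box_rel /= exy eqxx orbT.
Qed.

Lemma card_le_rows (W : {set T1 * T2}) :
  cycle_convex box W -> (forall h, row_of W h != setT) -> #|W| <= #|T2| * Ccc e1.
Proof.
move=> convW rowsT; rewrite card_rows -sum_nat_const leq_sum // => h _.
exact: leq_Ccc (rowsT h) (cycle_convex_row h convW).
Qed.

Lemma card_le_cols (W : {set T1 * T2}) :
  cycle_convex box W -> (forall g, col_of W g != setT) -> #|W| <= #|T1| * Ccc e2.
Proof.
move=> convW colsT; rewrite card_cols -sum_nat_const leq_sum // => g _.
exact: leq_Ccc (colsT g) (cycle_convex_col g convW).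
Qed.

Lemma cycle_convex_setXT (S : {set T1}) :
  cycle_convex e1 S -> cycle_convex box (setX S [set: T2]).
Proof.
move=> /cycle_convexP convS; apply/cycle_convexP => -[g h] [ga ha] [gb hb].
rewrite in_setX in_setT andbT => gS ab ewa ebw; apply/negP => cab.
have /andP [] := connect_induced_mem ab cab; rewrite !inE !andbT => gaS gbS.
move: ewa ebw; rewrite /box_rel /=.
case/orP => [/andP [egga /eqP hE] | /andP [/eqP gE _]]; last by rewrite gE gaS in gS.
case/orP => [/andP [eggb /eqP hE'] | /andP [/eqP gE _]]; last by rewrite -gE gbS in gS.
subst ha hb; rewrite xpair_eqE eqxx andbT in ab.
apply: (negP (convS _ _ _ gS ab egga eggb)).
apply: (connect_weak_homo (f := fst)) cab => -[x1 x2] [y1 y2].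
rewrite /induced /box_rel /= !inE !andbT => /and3P [-> -> /orP [] /andP [-> _]] //.
by rewrite orbT.
Qed.

Lemma mul_Ccc_leq_box : 0 < #|T2| -> #|T2| * Ccc e1 <= Ccc box.
Proof.
case/card_gt0P => h0 _; apply: mul_Ccc_leq => S ST convS.
rewrite mulnC -cardsT -cardsX; apply: leq_Ccc (cycle_convex_setXT convS).
apply: contra ST => /eqP SXT; apply/eqP/setP => g; rewrite inE.
have : (g, h0) \in setX S [set: T2] by rewrite SXT inE.
by rewrite in_setX in_setT andbT.
Qed.

Hypotheses (sg1 : simple_graph e1) (sg2 : simple_graph e2).

Lemma box_square (W : {set T1 * T2}) x y h h' :
    cycle_convex box W -> e1 x y -> e2 h h' ->
  (x, h) \in W -> (x, h') \in W -> (y, h) \in W -> (y, h') \in W.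
Proof.
case: sg1 sg2 => [sym1 irr1] [sym2 irr2] /cycle_convexP convW exy ehh xh xh' yh.
apply/negPn/negP => yh'W.
have yx : (y, h) != (x, h').
  by rewrite xpair_eqE negb_and; apply/orP; left; apply: contraTneq exy => ->; rewrite irr1.
have e_yh' : box (y, h') (y, h) by rewrite /box_rel /= eqxx sym2 ehh orbT.
have e_xh' : box (x, h') (y, h') by rewrite /box_rel /= exy eqxx.
apply: (negP (convW _ _ _ yh'W yx e_yh' e_xh')).
apply: (@connect_trans _ _ (x, h)); apply: connect1.
  by rewrite /induced /box_rel /= yh xh sym1 exy eqxx.
by rewrite /induced /box_rel /= xh xh' ehh eqxx orbT.
Qed.

Hypotheses (conn1 : connected_graph e1) (conn2 : connected_graph e2).

Lemma box_full (W : {set T1 * T2}) g0 h0 :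
  cycle_convex box W -> row_of W h0 = setT -> col_of W g0 = setT -> W = setT.
Proof.
case: sg1 sg2 => [sym1 _] [sym2 _] convW row0 col0.
have row_step h h' : e2 h h' -> row_of W h = setT -> row_of W h' = setT.
  move=> ehh rowh; apply/setP => g; rewrite !inE.
  have in_row x : (x, h) \in W by move/setP/(_ x): rowh; rewrite !inE.
  have closed_h' : closed e1 [pred x | (x, h') \in W].
    apply: (intro_closed (sym_connect_sym sym1)) => x y exy; rewrite !inE => xh'.
    exact: box_square convW exy ehh (in_row x) xh' (in_row y).
  have := closed_connect closed_h' (conn1 g0 g); rewrite !inE => <-.
  by move/setP/(_ h'): col0; rewrite !inE.
have closed_rows : closed e2 [pred h | row_of W h == setT].
  apply: (intro_closed (sym_connect_sym sym2)) => h h' ehh; rewrite !inE.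
  by move=> /eqP /(row_step _ _ ehh) ->.
apply/setP => -[g h]; rewrite inE.
have := closed_connect closed_rows (conn2 h0 h); rewrite !inE row0 eqxx => /esym /eqP.
by move/setP/(_ g); rewrite !inE.
Qed.

Lemma Ccc_box_leq : Ccc box <= maxn (#|T2| * Ccc e1) (#|T1| * Ccc e2).
Proof.
apply: Ccc_leq => W WT convW.
have [/forallP rowsT | /forallPn [h0 /negPn /eqP row0]] := boolP [forall h, row_of W h != setT].
  by rewrite leq_max card_le_rows.
have [/forallP colsT | /forallPn [g0 /negPn /eqP col0]] := boolP [forall g, col_of W g != setT].
  by rewrite leq_max card_le_cols ?orbT.
by rewrite (box_full convW row0 col0) eqxx in WT.
Qed.

End BoxProduct.

Lemma Ccc_box_swap (T1 T2 : finType) (e1 : rel T1) (e2 : rel T2) :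
  Ccc (box_rel e1 e2) = Ccc (box_rel e2 e1).
Proof.
apply: (@Ccc_bij _ _ _ _ (fun u : T1 * T2 => (u.2, u.1))).
  by exists (fun u => (u.2, u.1)) => -[].
by move=> [x1 x2] [y1 y2]; rewrite /box_rel /= orbC andbC (andbC (_ == _)).
Qed.

Theorem mainTheorem12 (T1 T2 : finType) (e1 : rel T1) (e2 : rel T2) :
  simple_graph e1 -> simple_graph e2 ->
  1 < #|T1| -> 1 < #|T2| ->
  connected_graph e1 -> connected_graph e2 ->
  Ccc (box_rel e1 e2) = maxn (#|T2| * Ccc e1) (#|T1| * Ccc e2).
Proof.
move=> sg1 sg2 n1 n2 conn1 conn2; apply/eqP; rewrite eqn_leq Ccc_box_leq //.
rewrite geq_max mul_Ccc_leq_box ?(ltnW n2) //.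
by rewrite Ccc_box_swap mul_Ccc_leq_box ?(ltnW n1).
Qed.
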